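(* Let $R$ be an NJ-symmetric exchange ring. Then (1) $R$ is clean, and (2) $R$ is quasi-duo.
   Context: Rings are associative with identity. $N(R)$ is the set of nilpotent elements, $J(R)$ the Jacobson radical. $R$ is NJ-symmetric if for all $a,b,c\in R$, $abc\in N(R)$ implies $bac\in J(R)$. $R$ is clean if every element is a sum of an idempotent and a unit. $R$ is quasi-duo if every maximal left ideal and every maximal right ideal of $R$ is a two-sided ideal. *)

From HB Require Import structures.
From mathcomp Require Import all_boot all_algebra.
Set Implicit Arguments. Unset Strict Implicit. Unset Printing Implicit Defensive.
Import GRing.Theory.
Local Open Scope ring_scope.

Definition is_unit (R : pzRingType) (u : R) : Prop :=
  exists v : R, u * v = 1 /\ v * u = 1.

Definition idempotent (R : pzRingType) (e : R) : Prop := e * e = e.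

Definition nilpotent (R : pzRingType) (a : R) : Prop := exists n : nat, a ^+ n = 0.

Definition left_ideal (R : pzRingType) (I : R -> Prop) : Prop :=
  [/\ I 0, (forall x y, I x -> I y -> I (x + y)), (forall x, I x -> I (- x))
    & (forall r x, I x -> I (r * x))].

Definition right_ideal (R : pzRingType) (I : R -> Prop) : Prop :=
  [/\ I 0, (forall x y, I x -> I y -> I (x + y)), (forall x, I x -> I (- x))
    & (forall r x, I x -> I (x * r))].

Definition two_sided_ideal (R : pzRingType) (I : R -> Prop) : Prop :=
  left_ideal I /\ right_ideal I.

Definition maximal_left_ideal (R : pzRingType) (I : R -> Prop) : Prop :=
  [/\ left_ideal I, ~ I 1 &
      forall K : R -> Prop, left_ideal K -> (forall x, I x -> K x) -> ~ K 1 ->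
        forall x, K x -> I x].

Definition maximal_right_ideal (R : pzRingType) (I : R -> Prop) : Prop :=
  [/\ right_ideal I, ~ I 1 &
      forall K : R -> Prop, right_ideal K -> (forall x, I x -> K x) -> ~ K 1 ->
        forall x, K x -> I x].

Definition jacobson (R : pzRingType) (x : R) : Prop :=
  forall I : R -> Prop, maximal_left_ideal I -> I x.

Definition NJ_symmetric (R : pzRingType) : Prop :=
  forall a b c : R, nilpotent (a * b * c) -> jacobson (b * a * c).

(* Nicholson's characterization, used as the definition of exchange ring:
   for every a there is an idempotent e in aR with 1 - e in (1 - a)R. *)
Definition exchange_ring (R : pzRingType) : Prop :=
  forall a : R, exists e : R, idempotent e /\
    (exists r : R, e = a * r) /\ (exists s : R, 1 - e = (1 - a) * s).

Definition clean_ring (R : pzRingType) : Prop :=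
  forall x : R, exists e u : R, idempotent e /\ is_unit u /\ x = e + u.

Definition quasi_duo (R : pzRingType) : Prop :=
  (forall I : R -> Prop, maximal_left_ideal I -> two_sided_ideal I) /\
  (forall I : R -> Prop, maximal_right_ideal I -> two_sided_ideal I).

From mathcomp Require Import all_boot all_algebra.
From mathcomp Require Import boolp classical_sets.
Set Implicit Arguments. Unset Strict Implicit. Unset Printing Implicit Defensive.
Import GRing.Theory.
Local Open Scope classical_set_scope.
Local Open Scope ring_scope.

(* In an NJ-symmetric ring every nilpotent element, hence every off-diagonal
   Peirce component e x (1 - e) and (1 - e) x e of an idempotent e, lies in
   J(R). Together with direct finiteness (r y = 1 forces y r = 1, because
   1 - y r is an idempotent in J(R)), this makes every w with w v = 1 + j or
   v w = 1 + j, j in J(R), a unit. For cleanness, write a = (1 - e) + u with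
   e the exchange idempotent of a; then u (e s e - (1 - e) t (1 - e)) is 1
   modulo off-diagonal terms. For quasi-duo, if 1 = m + q x r with m in a
   maximal left ideal M containing x, the exchange idempotent of m (or its
   complement) produces x' z + f = 1 with x', f in M and f idempotent, and then
   (1 - f) x' + f is a unit lying in M. For a maximal right ideal the exchange
   idempotent of m already lies in M, and x' (1 - f) + f plays that role. *)

Lemma bigcup_chain2 (T : Type) (F : set (set T)) (x y : T) :
  total_on F (fun X Y => X `<=` Y) -> (\bigcup_(X in F) X) x ->
  (\bigcup_(X in F) X) y -> exists2 X, F X & X x /\ X y.
Proof.
move=> Ftot [X FX Xx] [Y FY Yy].
have [XY|YX] := Ftot X Y FX FY; [exists Y | exists X] => //.
- by split=> //; apply: XY.
- by split=> //; apply: YX.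
Qed.

Section Ideals.
Variable R : pzRingType.
Implicit Types (I K M : R -> Prop) (j r x y u : R).

(* The empty set is admitted in the Zorn family so that the empty chain has
   an upper bound; a maximal member is then nonempty since [K] is. *)
Lemma exists_maximal_left_ideal K :
  left_ideal K -> ~ K 1 -> exists2 M, maximal_left_ideal M & forall x, K x -> M x.
Proof.
move=> KI NK1.
pose P (B : set R) := left_ideal B /\ ~ B 1 /\ (forall x, K x -> B x).
have [|A [PA Amax]] := @Zorn_bigcup R (fun B => B !=set0 -> P B).
  move=> F FP Ftot [x [X FX Xx]].
  have PF Y z : F Y -> Y z -> P Y by move=> FY Yz; apply: (FP Y FY); exists z.
  have [[X0 _ _ _] [_ KX]] := PF X x FX Xx.
  split; [split|split].
  - by exists X.
  - move=> y z /(bigcup_chain2 Ftot) /[apply] -[Y FY [Yy Yz]].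
    by have [[_ YD _ _] _] := PF Y y FY Yy; exists Y => //; apply: YD.
  - move=> y [Y FY Yy]; have [[_ _ YN _] _] := PF Y y FY Yy.
    by exists Y => //; apply: YN.
  - move=> r y [Y FY Yy]; have [[_ _ _ YM] _] := PF Y y FY Yy.
    by exists Y => //; apply: YM.
  - by case=> Y FY Y1; have [_ []] := PF Y 1 FY Y1.
  - by move=> y Ky; exists X => //; apply: KX.
have A0 : A !=set0.
  apply: contrapT => NA; apply: (Amax K) => //; split.
  - by move=> y Ay; exfalso; apply: NA; exists y.
  - by move=> KA; apply: NA; exists 0; apply: KA; case: KI.
have [AI [NA1 KA]] := PA A0.
exists A => //; split=> // K' K'I AK' NK'1 x K'x.
apply: contrapT => NAx; apply: (Amax K').
  by split; [move=> y; apply: AK' | move=> /(_ x K'x)].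
by move=> _; split=> //; split=> // y /KA /AK'.
Qed.

Lemma maximal_left_ideal_comaximal M y :
  maximal_left_ideal M -> ~ M y -> exists m q, M m /\ 1 = m + q * y.
Proof.
case=> -[M0 MD MN MM] _ Mmax NMy.
pose K z := exists m q, M m /\ z = m + q * y.
have KI : left_ideal K.
  split.
  - by exists 0, 0; rewrite mul0r addr0.
  - move=> _ _ [m [q [Mm ->]]] [m' [q' [Mm' ->]]].
    by exists (m + m'), (q + q'); rewrite mulrDl addrACA; split=> //; apply: MD.
  - move=> _ [m [q [Mm ->]]].
    by exists (- m), (- q); rewrite opprD mulNr; split=> //; apply: MN.
  - move=> r _ [m [q [Mm ->]]].
    by exists (r * m), (r * q); rewrite mulrDr mulrA; split=> //; apply: MM.
apply: contrapT => NK1; apply: NMy; apply: (Mmax K KI).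
- by move=> x Mx; exists x, 0; rewrite mul0r addr0.
- by case=> m [q [Mm mq1]]; apply: NK1; exists m, q.
- by exists 0, 1; rewrite mul1r add0r.
Qed.

Lemma maximal_right_ideal_comaximal M y :
  maximal_right_ideal M -> ~ M y -> exists m q, M m /\ 1 = m + y * q.
Proof.
case=> -[M0 MD MN MM] _ Mmax NMy.
pose K z := exists m q, M m /\ z = m + y * q.
have KI : right_ideal K.
  split.
  - by exists 0, 0; rewrite mulr0 addr0.
  - move=> _ _ [m [q [Mm ->]]] [m' [q' [Mm' ->]]].
    by exists (m + m'), (q + q'); rewrite mulrDr addrACA; split=> //; apply: MD.
  - move=> _ [m [q [Mm ->]]].
    by exists (- m), (- q); rewrite opprD mulrN; split=> //; apply: MN.
  - move=> r _ [m [q [Mm ->]]].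
    by exists (m * r), (q * r); rewrite mulrDl mulrA; split=> //; apply: MM.
apply: contrapT => NK1; apply: NMy; apply: (Mmax K KI).
- by move=> x Mx; exists x, 0; rewrite mulr0 addr0.
- by case=> m [q [Mm mq1]]; apply: NK1; exists m, q.
- by exists 0, 1; rewrite mulr1 add0r.
Qed.

Lemma left_ideal_unit I u : left_ideal I -> I u -> is_unit u -> I 1.
Proof. by case=> _ _ _ IM Iu [v [_ <-]]; apply: IM. Qed.

Lemma right_ideal_unit I u : right_ideal I -> I u -> is_unit u -> I 1.
Proof. by case=> _ _ _ IM Iu [v [<- _]]; apply: IM. Qed.

Lemma jacobsonD x y : jacobson x -> jacobson y -> jacobson (x + y).
Proof.
by move=> Jx Jy M maxM; have [[_ MD _ _] _ _] := maxM; apply: MD; [exact: Jx | exact: Jy].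
Qed.

Lemma jacobsonN x : jacobson x -> jacobson (- x).
Proof. by move=> Jx M maxM; have [[_ _ MN _] _ _] := maxM; apply: MN; exact: Jx. Qed.

Lemma jacobsonMl r x : jacobson x -> jacobson (r * x).
Proof. by move=> Jx M maxM; have [[_ _ _ MM] _ _] := maxM; apply: MM; exact: Jx. Qed.

Lemma jacobson_linv_subr1 j : jacobson j -> exists r, r * (1 - j) = 1.
Proof.
move=> Jj; apply: contrapT => Nlinv.
pose K y := exists r, y = r * (1 - j).
have KI : left_ideal K.
  split.
  - by exists 0; rewrite mul0r.
  - by move=> _ _ [r ->] [r' ->]; exists (r + r'); rewrite mulrDl.
  - by move=> _ [r ->]; exists (- r); rewrite mulNr.
  - by move=> r0 _ [r ->]; exists (r0 * r); rewrite mulrA.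
have [|M maxM KM] := exists_maximal_left_ideal KI.
  by case=> r r1; apply: Nlinv; exists r.
have M1j : M (1 - j) by apply: KM; exists 1; rewrite mul1r.
case: (maxM) => -[_ MD _ _] NM1 _; apply: NM1.
by rewrite -(subrK j 1); apply: MD => //; apply: Jj.
Qed.

End Ideals.

Section Idempotents.
Variables (R : pzRingType) (e : R).
Hypothesis ee : e * e = e.

Lemma idem_mulBr : e * (1 - e) = 0.
Proof. by rewrite mulrBr mulr1 ee subrr. Qed.

Lemma idem_mulBl : (1 - e) * e = 0.
Proof. by rewrite mulrBl mul1r ee subrr. Qed.

Lemma idem_subr1 : (1 - e) * (1 - e) = 1 - e.
Proof. by rewrite mulrBr mulr1 idem_mulBl subr0. Qed.

End Idempotents.

Section NJSymmetric.
Variable R : pzRingType.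
Hypothesis NJ : NJ_symmetric R.
Implicit Types (f j r v w x y z : R) (M : R -> Prop).

Lemma nilpotent_jacobson x : nilpotent x -> jacobson x.
Proof. by have := @NJ x 1 1; rewrite !mulr1 mul1r. Qed.

Lemma jacobson_orthogonal f g x : g * f = 0 -> jacobson (f * x * g).
Proof.
move=> gf; apply: nilpotent_jacobson; exists 2%N.
by rewrite expr2 -!mulrA (mulrA g) gf mul0r !mulr0.
Qed.

Lemma directly_finite r y : r * y = 1 -> y * r = 1.
Proof.
move=> ry; pose g := 1 - y * r.
have rg : r * g = 0 by rewrite mulrBr mulr1 mulrA ry mul1r subrr.
have Jg : jacobson g.
  by have := @NJ r g y; rewrite -(mulrA g) ry mulr1; apply; exists 1%N; rewrite rg mul0r.
have gg : g * g = g by rewrite {1}/g mulrBl mul1r -mulrA rg mulr0 subr0.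
have [w wg] := jacobson_linv_subr1 Jg.
suff g0 : g = 0 by apply/esym/subr0_eq.
by rewrite -[g]mul1r -wg -mulrA idem_mulBl // mulr0.
Qed.

Lemma is_unit_of_rinv w v : w * v = 1 -> is_unit w.
Proof. by move=> wv; exists v; split=> //; apply: directly_finite. Qed.

Lemma jacobson_unit1D j : jacobson j -> is_unit (1 + j).
Proof.
move=> Jj; have [r] := jacobson_linv_subr1 (jacobsonN Jj).
by rewrite opprK => r1j; exists r; split=> //; apply: directly_finite.
Qed.

Lemma is_unit_of_rinv_jacobson j w v : jacobson j -> w * v = 1 + j -> is_unit w.
Proof.
move=> /jacobson_unit1D [k [jk _]] wv.
by apply: (@is_unit_of_rinv _ (v * k)); rewrite mulrA wv.
Qed.

Lemma is_unit_of_linv_jacobson j w v : jacobson j -> v * w = 1 + j -> is_unit w.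
Proof.
move=> /jacobson_unit1D [k [_ kj]] vw.
have kvw : k * v * w = 1 by rewrite -mulrA vw.
by exists (k * v); split=> //; apply: directly_finite.
Qed.

Lemma is_unit_compl_idem_l f x z :
  f * f = f -> x * z = 1 - f -> is_unit ((1 - f) * x + f).
Proof.
move=> ff xz; apply: (@is_unit_of_rinv_jacobson ((1 - f) * x * f + f * z * (1 - f))
  _ (z * (1 - f) + f)).
  by apply: jacobsonD; apply: jacobson_orthogonal; [exact: idem_mulBr | exact: idem_mulBl].
rewrite mulrDl (mulrDr ((1 - f) * x)) (mulrDr f) ff !mulrA -(mulrA (1 - f) x) xz.
by rewrite !idem_subr1 // (addrC _ f) addrACA subrK.
Qed.

Lemma is_unit_compl_idem_r f x z :
  f * f = f -> z * x = 1 - f -> is_unit (x * (1 - f) + f).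
Proof.
move=> ff zx; apply: (@is_unit_of_linv_jacobson ((1 - f) * z * f + f * x * (1 - f))
  _ ((1 - f) * z + f)).
  by apply: jacobsonD; apply: jacobson_orthogonal; [exact: idem_mulBr | exact: idem_mulBl].
rewrite mulrDl (mulrDr ((1 - f) * z)) (mulrDr f) ff !mulrA -(mulrA (1 - f) z) zx.
by rewrite !idem_subr1 // (addrC _ f) addrACA subrK.
Qed.

Lemma clean_of_exchange : exchange_ring R -> clean_ring R.
Proof.
move=> EX a; have [e [ee [[s es] [t et]]]] := EX a.
have {}ee : e * e = e := ee.
exists (1 - e), (a - (1 - e)); split; first exact: idem_subr1.
split; last by rewrite addrC subrK.
set u := a - (1 - e).
have ue : u * e = a * e by rewrite mulrBl idem_mulBl // subr0.
have u1e : u * (1 - e) = - ((1 - a) * (1 - e)).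
  by rewrite mulrBl idem_subr1 // mulrBl mul1r [RHS]opprB.
have aese : a * e * (s * e) = e - a * ((1 - e) * s * e).
  by rewrite mulrBl mul1r mulrBl mulrBr !mulrA -es ee opprB addrC subrK.
have a1et1e : (1 - a) * (1 - e) * (t * (1 - e)) = (1 - e) - (1 - a) * (e * t * (1 - e)).
  by rewrite mulrBr mulr1 mulrBl (mulrA (1 - a) t) -et idem_subr1 // !mulrA.
have Jse : jacobson ((1 - e) * s * e) by apply: jacobson_orthogonal; exact: idem_mulBr.
have Jte : jacobson (e * t * (1 - e)) by apply: jacobson_orthogonal; exact: idem_mulBl.
apply: (@is_unit_of_rinv_jacobson
  (- (a * ((1 - e) * s * e) + (1 - a) * (e * t * (1 - e)))) _
  (e * (s * e) - (1 - e) * (t * (1 - e)))).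
  by apply: jacobsonN; apply: jacobsonD; exact: jacobsonMl.
rewrite mulrBr (mulrA u e) (mulrA u (1 - e)) ue u1e mulNr opprK aese a1et1e.
by rewrite addrACA subrKC opprD.
Qed.

Lemma maximal_left_ideal_idemVcompl f M :
  maximal_left_ideal M -> f * f = f -> M f \/ M (1 - f).
Proof.
move=> maxM ff; have [|NMf] := pselect (M f); [by left | right].
have [m [q [Mm mqf]]] := maximal_left_ideal_comaximal maxM NMf.
case: (maxM) => -[_ MD MN MM] _ _.
have Jin x : jacobson x -> M x by move=> /(_ M maxM).
have -> : 1 - f = (1 - f) * m * (1 - f) + f * m * (1 - f).
  rewrite -!mulrDl subrK mul1r -[LHS]mul1r [X in X * _]mqf mulrDl.
  by rewrite -(mulrA q) idem_mulBr // mulr0 addr0.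
rewrite mulrBr mulr1.
apply: (MD); last by apply: Jin; apply: jacobson_orthogonal; exact: idem_mulBl.
apply: MD; first exact: MM.
by apply: MN; apply: Jin; apply: jacobson_orthogonal; exact: idem_mulBr.
Qed.

Lemma maximal_left_ideal_mul_add_idem_neq1 M x z f :
  maximal_left_ideal M -> M x -> M f -> f * f = f -> x * z + f <> 1.
Proof.
case=> -[M0 MD MN MM] NM1 _ Mx Mf ff xzf; apply: NM1.
apply: (@left_ideal_unit _ _ ((1 - f) * x + f)); first by split.
  by apply: MD => //; apply: MM.
by apply: is_unit_compl_idem_l (ff) _; rewrite -xzf addrK.
Qed.

Lemma maximal_right_ideal_mul_add_idem_neq1 M x z f :
  maximal_right_ideal M -> M x -> M f -> f * f = f -> z * x + f <> 1.
Proof.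
case=> -[M0 MD MN MM] NM1 _ Mx Mf ff zxf; apply: NM1.
apply: (@right_ideal_unit _ _ (x * (1 - f) + f)); first by split.
  by apply: MD => //; apply: MM.
by apply: is_unit_compl_idem_r (ff) _; rewrite -zxf addrK.
Qed.

Lemma maximal_left_ideal_two_sided M :
  exchange_ring R -> maximal_left_ideal M -> two_sided_ideal M.
Proof.
move=> EX maxM; have [[M0 MD MN MM] _ _] := maxM.
split; split=> // r x Mx; apply: contrapT => NMxr.
have [m [q [Mm mqxr]]] := maximal_left_ideal_comaximal maxM NMxr.
have [e [ee [[s es] [t et]]]] := EX m.
have qxr : q * (x * r) = 1 - m by rewrite mqxr addrAC subrr add0r.
have [Me|M1e] := maximal_left_ideal_idemVcompl maxM ee.
  apply: (@maximal_left_ideal_mul_add_idem_neq1 M (q * x) (r * t) e) => //; first exact: MM.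
  by rewrite mulrA -(mulrA q) qxr -et subrK.
by apply: (@maximal_left_ideal_mul_add_idem_neq1 M m s (1 - e)) => //;
  [exact: idem_subr1 | rewrite -es subrKC].
Qed.

Lemma maximal_right_ideal_two_sided M :
  exchange_ring R -> maximal_right_ideal M -> two_sided_ideal M.
Proof.
move=> EX maxM; have [[M0 MD MN MM] _ _] := maxM.
split; split=> // r x Mx; apply: contrapT => NMrx.
have [m [q [Mm mrxq]]] := maximal_right_ideal_comaximal maxM NMrx.
have rxq : r * x * q = 1 - m by rewrite mrxq addrAC subrr add0r.
have [e [ee [[s es] [t et]]]] := EX m.
apply: (@maximal_right_ideal_mul_add_idem_neq1 M (x * (q * t)) r e) => //.
- exact: MM.
- by rewrite es; apply: MM.
- by rewrite !mulrA rxq -et subrK.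
Qed.

End NJSymmetric.

Theorem proposition2p9 (R : pzRingType) :
  NJ_symmetric R -> exchange_ring R -> clean_ring R /\ quasi_duo R.
Proof.
move=> NJ EX; split; first exact: clean_of_exchange.
by split=> M; [apply: maximal_left_ideal_two_sided | apply: maximal_right_ideal_two_sided].
Qed.
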